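(* Let $r\ge0$ and let $A$ be an $E_{r+1}$-cofibrant dga. Then: (1) for all $n\ge0$ and $p\in\mathbb{Z}$, $(\mathrm{Dec}W)_pA^n=W_{p-n}A^n$; (2) the filtered dga $(A,\mathrm{Dec}W)$ is $E_r$-cofibrant.
   Context: Filtered dga's: a filtered dga over a field $\mathbf{k}$ of characteristic $0$ is a non-negatively graded commutative dga $A$ (differential of degree $+1$) with an increasing multiplicative regular exhaustive filtration $W$ by subcomplexes, with filtered unit ($\mathbf{k}$ trivially filtered). Deligne's décalage: $(\mathrm{Dec}W)_pA^n=\{x\in W_{p-n}A^n: dx\in W_{p-n-1}A^{n+1}\}$. $E_r$-cofibrant dga's: given a filtered dga $A$, an $E_r$-cofibrant extension of degree $n$ and weight $p$ is $A\otimes_\xi\Lambda V$ where $V$ is a vector space concentrated in degree $n$ and pure weight $p$ ($W_{p-1}V=0$, $W_pV=V$) and $\xi:V\to W_{p-r}A^{n+1}$ is linear with $d\circ\xi=0$; differential $dv=\xi(v)$ and filtration extended multiplicatively. An $E_r$-cofibrant dga is the colimit of a sequence of $E_r$-cofibrant extensions starting from $\mathbf{k}$. *)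

From HB Require Import structures.
From mathcomp Require Import all_boot all_order all_algebra.
Set Implicit Arguments. Unset Strict Implicit. Unset Printing Implicit Defensive.
Import Order.TTheory GRing.Theory Num.Theory.
Local Open Scope ring_scope.

(* A graded object is modelled as a total space T (a k-algebra) together with
   subspaces deg n (the homogeneous part of degree n, n : nat) such that
   T = (+)_n deg n (internal direct sum).  A filtration is a family of
   subspaces W p n of deg n (W_p A^n), p : int. *)

Section Defs.
Variable k : fieldType.

Definition subspace (T : lmodType k) (P : T -> Prop) : Prop :=
  P 0 /\ forall (c : k) x y, P x -> P y -> P (c *: x + y).

Definition graded_alg (T : algType k) (deg : nat -> T -> Prop) : Prop :=
  (forall n, subspace (deg n)) /\
  deg 0%N 1 /\
  (forall n m x y, deg n x -> deg m y -> deg (n + m)%N (x * y)) /\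
  (forall x, exists (N : nat) (f : nat -> T),
      (forall i, deg i (f i)) /\ x = \sum_(i < N) f i) /\
  (forall (N : nat) (f : nat -> T), (forall i, deg i (f i)) ->
      \sum_(i < N) f i = 0 -> forall i, (i < N)%N -> f i = 0).

Definition graded_comm_alg (T : algType k) (deg : nat -> T -> Prop) : Prop :=
  graded_alg deg /\
  forall n m x y, deg n x -> deg m y -> x * y = (-1) ^+ (n * m) * (y * x).

Definition filtered_dga (T : algType k) (deg : nat -> T -> Prop) (d : T -> T)
    (W : int -> nat -> T -> Prop) : Prop :=
  graded_comm_alg deg /\
  (forall (c : k) x y, d (c *: x + y) = c *: d x + d y) /\
  (forall n x, deg n x -> deg n.+1 (d x)) /\
  (forall x, d (d x) = 0) /\
  (forall n x y, deg n x -> d (x * y) = d x * y + (-1) ^+ n * (x * d y)) /\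
  (forall p n, subspace (W p n)) /\
  (forall p n x, W p n x -> deg n x) /\
  (forall p q n x, p <= q -> W p n x -> W q n x) /\
  (forall p q n m x y, W p n x -> W q m y -> W (p + q) (n + m)%N (x * y)) /\
  (forall p n x, W p n x -> W p n.+1 (d x)) /\
  (forall n, exists p, forall x, W p n x -> x = 0) /\
  (forall n x, deg n x -> exists p, W p n x) /\
  W 0 0%N 1.

Definition Dec (T : algType k) (W : int -> nat -> T -> Prop) (d : T -> T)
    (p : int) (n : nat) (x : T) : Prop :=
  W (p - n%:Z) n x /\ W (p - n%:Z - 1) n.+1 (d x).

Definition sub_dga (T : algType k) (deg : nat -> T -> Prop) (d : T -> T)
    (B : T -> Prop) : Prop :=
  subspace B /\ B 1 /\ (forall x y, B x -> B y -> B (x * y)) /\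
  (forall x, B x -> B (d x)) /\
  (forall x, B x -> exists (N : nat) (f : nat -> T),
      (forall i, deg i (f i) /\ B (f i)) /\ x = \sum_(i < N) f i).

Definition galg_hom_on (T : algType k) (degT : nat -> T -> Prop)
    (S : algType k) (degS : nat -> S -> Prop) (C : T -> Prop) (h : T -> S) :=
  (forall (c : k) x y, C x -> C y -> h (c *: x + y) = c *: h x + h y) /\
  h 1 = 1 /\
  (forall x y, C x -> C y -> h (x * y) = h x * h y) /\
  (forall n x, C x -> degT n x -> degS n (h x)).

(* C is (as a graded-commutative algebra) B (x) Lambda V, V a subspace of
   degree n, i.e. C is the coproduct of B and the free graded-commutative
   algebra on V: universal property. *)
Definition free_ext (T : algType k) (degT : nat -> T -> Prop)
    (B C V : T -> Prop) (n : nat) : Prop :=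
  (forall x, B x -> C x) /\ (forall x, V x -> C x /\ degT n x) /\ subspace V /\
  forall (S : algType k) (degS : nat -> S -> Prop), graded_comm_alg degS ->
  forall (f g : T -> S), galg_hom_on degT degS B f ->
    (forall (c : k) x y, V x -> V y -> g (c *: x + y) = c *: g x + g y) ->
    (forall x, V x -> degS n (g x)) ->
    (exists h, galg_hom_on degT degS C h /\
        (forall x, B x -> h x = f x) /\ (forall x, V x -> h x = g x)) /\
    (forall h1 h2, galg_hom_on degT degS C h1 -> galg_hom_on degT degS C h2 ->
        (forall x, B x -> h1 x = h2 x) -> (forall x, V x -> h1 x = h2 x) ->
        forall x, C x -> h1 x = h2 x).

(* generators of the multiplicatively extended filtration W_q of B (x) Lambda V
   in degree m: a * v_1 * ... * v_l with a in W_{q - l p} B^j, v_i in V,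
   j + l n = m *)
Definition ext_gen (T : algType k) (W : int -> nat -> T -> Prop)
    (B V : T -> Prop) (n : nat) (p : int) (q : int) (m : nat) (y : T) : Prop :=
  exists (j l : nat) (a : T) (vs : seq T),
    (j + l * n)%N = m /\ size vs = l /\ B a /\ W (q - l%:Z * p) j a /\
    (forall i, (i < l)%N -> V (nth 0 vs i)) /\
    y = a * \prod_(v <- vs) v.

Definition Er_ext (r : nat) (T : algType k) (deg : nat -> T -> Prop)
    (d : T -> T) (W : int -> nat -> T -> Prop) (B C : T -> Prop) : Prop :=
  exists (n : nat) (p : int) (V : T -> Prop),
    free_ext deg B C V n /\
    (forall v, V v -> B (d v) /\ W (p - r%:Z) n.+1 (d v)) /\
    (* the filtration on C is the multiplicative extension *)
    (forall q m x, C x ->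
       (W q m x <-> exists s : seq T,
          (forall y, y \in s -> ext_gen W B V n p q m y) /\
          x = \sum_(y <- s) y)).

(* E_r-cofibrant filtered dga: colimit (increasing union) of a sequence of
   E_r-cofibrant extensions starting from k (trivially filtered) *)
Definition Er_cofibrant (r : nat) (T : algType k) (deg : nat -> T -> Prop)
    (d : T -> T) (W : int -> nat -> T -> Prop) : Prop :=
  filtered_dga deg d W /\
  exists Bs : nat -> T -> Prop,
    (forall x, Bs 0%N x <-> exists c : k, x = c%:A) /\
    (forall q x, q < 0 -> Bs 0%N x -> W q 0%N x -> x = 0) /\
    (forall i, sub_dga deg d (Bs i)) /\
    (forall i, Er_ext r deg d W (Bs i) (Bs i.+1)) /\
    (forall x, exists i, Bs i x).

End Defs.

From HB Require Import structures.
From mathcomp Require Import all_boot all_order all_algebra.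
From mathcomp Require Import zify ring.
Set Implicit Arguments. Unset Strict Implicit. Unset Printing Implicit Defensive.
Import Order.TTheory GRing.Theory Num.Theory.
Local Open Scope ring_scope.

(* The heart of the matter is that in an E_{r+1}-cofibrant dga the
   differential strictly lowers the weight: d W_q A^m ⊆ W_{q-1} A^{m+1}.
   Call x "weight-lowering of weight p in degree n" when x ∈ W_p A^n and
   dx ∈ W_{p-1} A^{n+1}.  By the Leibniz rule products of such elements are
   again of this kind, with added weights and degrees.  Along the tower of
   E_{r+1}-extensions B_i ⊆ B_{i+1} the filtration on B_{i+1} is generated
   by products a·v_1⋯v_l with a ∈ B_i and v_j generators of weight p, whose
   differentials lie in W_{p-r-1} ⊆ W_{p-1}; hence weight-lowering
   propagates from B_i to B_{i+1}, and by exhaustion to all of A.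
   Part (1) is then immediate: the condition on dx in (Dec W)_p A^n is
   automatic.  For part (2) (Dec W)_p A^n = W_{p-n} A^n is a reindexing of W,
   so all filtered dga axioms transfer, and an E_{r+1}-extension of degree n
   and weight p for W is an E_r-extension of degree n and weight p+n for
   Dec W, since W_{p-r-1} A^{n+1} = (Dec W)_{p+n-r} A^{n+1}. *)

Section FilteredDGA.
Variables (k : fieldType) (T : algType k) (deg : nat -> T -> Prop)
  (d : T -> T) (W : int -> nat -> T -> Prop).
Hypothesis HF : filtered_dga deg d W.

Lemma d_linear (c : k) x y : d (c *: x + y) = c *: d x + d y.
Proof. by case: HF => _ [h _]. Qed.

Lemma d_Leibniz n x y : deg n x -> d (x * y) = d x * y + (-1) ^+ n * (x * d y).
Proof. by case: HF => _ [_ [_ [_ [h _]]]]; apply: h. Qed.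

Lemma W_subspace p n : subspace (W p n).
Proof. by case: HF => _ [_ [_ [_ [_ [h _]]]]]. Qed.

Lemma W_deg p n x : W p n x -> deg n x.
Proof. by case: HF => _ [_ [_ [_ [_ [_ [h _]]]]]]; apply: h. Qed.

Lemma W_mono p q n x : p <= q -> W p n x -> W q n x.
Proof. by case: HF => _ [_ [_ [_ [_ [_ [_ [h _]]]]]]]; apply: h. Qed.

Lemma W_mul p q n m x y : W p n x -> W q m y -> W (p + q) (n + m) (x * y).
Proof. by case: HF => _ [_ [_ [_ [_ [_ [_ [_ [h _]]]]]]]]; apply: h. Qed.

Lemma W_unit : W 0 0 1.
Proof. by case: HF => _ [_ [_ [_ [_ [_ [_ [_ [_ [_ [_ [_ h]]]]]]]]]]]. Qed.

Lemma W_cast p p' n n' x : W p n x -> p = p' -> n = n' -> W p' n' x.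
Proof. by move=> h <- <-. Qed.

Lemma W0 p n : W p n 0.
Proof. by case: (W_subspace p n). Qed.

Lemma WD p n x y : W p n x -> W p n y -> W p n (x + y).
Proof. by case: (W_subspace p n) => _ h hx hy; move: (h 1 x y hx hy); rewrite scale1r. Qed.

Lemma W_sum p n (s : seq T) (F : T -> T) :
  (forall y, y \in s -> W p n (F y)) -> W p n (\sum_(y <- s) F y).
Proof. by move=> hs; rewrite big_seq; apply: big_ind => //; [exact: W0 | exact: WD]. Qed.

Lemma W_signM e p n x : W p n x -> W p n ((-1) ^+ e * x).
Proof.
have hm1 : W 0 0 (-1).
  by case: (W_subspace 0 0) => _ h; move: (h (-1) 1 0 W_unit (W0 _ _)); rewrite addr0 scaleN1r.
have hsign : W 0 0 ((-1) ^+ e).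
  elim: e => [|e IH]; first by rewrite expr0; exact: W_unit.
  by rewrite exprS; exact: W_mul hm1 IH.
by move=> hx; apply: W_cast (W_mul hsign hx) _ _; rewrite ?add0r ?add0n.
Qed.

Lemma dD x y : d (x + y) = d x + d y.
Proof. by have := d_linear 1 x y; rewrite !scale1r. Qed.

Lemma d0 : d 0 = 0.
Proof. by apply: (addrI (d 0)); rewrite -dD !addr0. Qed.

Lemma dZ (c : k) x : d (c *: x) = c *: d x.
Proof. by have := d_linear c x 0; rewrite addr0 d0 addr0. Qed.

Lemma d_sum (s : seq T) : d (\sum_(y <- s) y) = \sum_(y <- s) d y.
Proof. by elim: s => [|y s IH]; rewrite ?big_nil ?d0 // !big_cons dD IH. Qed.

Lemma d1 : d 1 = 0.
Proof.
have := d_Leibniz 1 (W_deg W_unit); rewrite expr0 !mul1r mulr1 => h.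
by apply: (addrI (d 1)); rewrite addr0 -h.
Qed.

Definition lowering (p : int) (n : nat) (x : T) : Prop :=
  W p n x /\ W (p - 1) n.+1 (d x).

Definition weight_lowering (S : T -> Prop) : Prop :=
  forall x, S x -> forall q m, W q m x -> W (q - 1) m.+1 (d x).

Lemma lowering_unit : lowering 0 0 1.
Proof. by split; [exact: W_unit | rewrite d1; exact: W0]. Qed.

Lemma lowering_mul p q n m x y :
  lowering p n x -> lowering q m y -> lowering (p + q) (n + m) (x * y).
Proof.
move=> [hx hdx] [hy hdy]; split; first exact: W_mul.
rewrite (d_Leibniz _ (W_deg hx)); apply: WD.
  by apply: W_cast (W_mul hdx hy) _ _; [ring | rewrite addSn].
by apply/W_signM; apply: W_cast (W_mul hx hdy) _ _; [ring | rewrite addnS].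
Qed.

Lemma lowering_prod p n (vs : seq T) :
  (forall i, (i < size vs)%N -> lowering p n (nth 0 vs i)) ->
  lowering ((size vs)%:Z * p) (size vs * n) (\prod_(v <- vs) v).
Proof.
elim: vs => [|v vs IH] hv; first by rewrite big_nil mul0r; exact: lowering_unit.
rewrite big_cons; have := lowering_mul (hv 0%N erefl) (IH (fun i => hv i.+1)).
by congr lowering; rewrite /= ?mulSn //; ring.
Qed.

Lemma ext_gen_lowering (B V : T -> Prop) n p q m y :
  weight_lowering B -> (forall v, V v -> lowering p n v) ->
  ext_gen W B V n p q m y -> W (q - 1) m.+1 (d y).
Proof.
move=> hB hV [j [l [a [vs [<- [hsz [hBa [hWa [hvs ->]]]]]]]]].
have hprod := @lowering_prod p n vs; rewrite hsz in hprod.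
have [_ h] := lowering_mul (conj hWa (hB a hBa _ _ hWa)) (hprod (fun i hi => hV _ (hvs i hi))).
by apply: W_cast h _ erefl; ring.
Qed.

(* An E_{r+1}-extension of a weight-lowering sub-dga is weight-lowering:
   the new generators v = 1·v have weight p and differentials of weight
   at most p - r - 1. *)
Lemma Er_ext_lowering r (B C : T -> Prop) :
  B 1 -> Er_ext r.+1 deg d W B C -> weight_lowering B -> weight_lowering C.
Proof.
move=> hB1 [n [p [V [[_ [hVC _]] [hxi hfilt]]]]] hB x hx q m hW.
have hVlow v : V v -> lowering p n v.
  move=> hv; have [hCv _] := hVC v hv; split; last first.
    by case: (hxi v hv) => _; apply: W_mono; lia.
  apply/(hfilt p n v hCv).2; exists [:: v]; split; last by rewrite big_seq1.
  move=> z; rewrite inE => /eqP ->.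
  exists 0%N, 1%N, 1, [:: v]; do !split => //; rewrite ?big_seq1 ?mul1r //.
  - by rewrite add0n mul1n.
  - by apply: W_cast W_unit _ erefl; rewrite subrr.
  - by case.
have [s [hs ->]] := (hfilt q m x hx).1 hW.
by rewrite d_sum; apply: W_sum => y /hs; exact: ext_gen_lowering.
Qed.

Lemma tower_lowering r (Bs : nat -> T -> Prop) :
  (forall x, Bs 0%N x <-> exists c : k, x = c%:A) ->
  (forall i, sub_dga deg d (Bs i)) ->
  (forall i, Er_ext r.+1 deg d W (Bs i) (Bs i.+1)) ->
  forall i, weight_lowering (Bs i).
Proof.
move=> hB0 hsub hext; elim=> [|i IH].
  by move=> x /hB0 [c ->] q m _; rewrite dZ d1 scaler0; exact: W0.
by case: (hsub i) => _ [hB1 _]; exact: Er_ext_lowering hB1 (hext i) IH.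
Qed.

End FilteredDGA.

Section Decalage.
Variables (k : fieldType) (T : algType k) (deg : nat -> T -> Prop)
  (d : T -> T) (W : int -> nat -> T -> Prop).
Hypothesis HF : filtered_dga deg d W.
Hypothesis d_lowers : forall q m x, W q m x -> W (q - 1) m.+1 (d x).

Lemma Dec_iff n p x : Dec W d p n x <-> W (p - n%:Z) n x.
Proof. by split=> [[]//|h]; split=> //; exact: d_lowers. Qed.

Lemma Dec_cast p n q x : W q n x -> q = p - n%:Z -> Dec W d p n x.
Proof. by move=> h hq; apply/Dec_iff; apply: W_cast h hq erefl. Qed.

Lemma Dec_filtered_dga : filtered_dga deg d (Dec W d).
Proof.
have [hgc [hlin [hdeg [hdd [hleib [_ [_ [_ [_ [_ [hreg [hex _]]]]]]]]]]]] := HF.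
do 5 (split; first by []).
split.
  move=> p n; case: (W_subspace HF (p - n%:Z) n) => h0 hs.
  by split=> [|c x y /Dec_iff hx /Dec_iff hy]; apply/Dec_iff; [exact: h0 | exact: hs].
split; first by move=> p n x /Dec_iff /(W_deg HF).
split; first by move=> p q n x hpq /Dec_iff hx; apply/Dec_iff; apply: (W_mono HF) hx; lia.
split.
  move=> p q n m x y /Dec_iff hx /Dec_iff hy.
  by apply: Dec_cast (W_mul HF hx hy) _; rewrite PoszD; ring.
split; first by move=> p n x /Dec_iff /d_lowers hx; apply: Dec_cast hx _; ring.
split.
  move=> n; have [p hp] := hreg n; exists (p + n%:Z) => x /Dec_iff hx.
  by apply: hp; apply: W_cast hx _ erefl; ring.
split.
  move=> n x /(hex n) [p hp]; exists (p + n%:Z).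
  by apply: Dec_cast hp _; ring.
by apply: Dec_cast (W_unit HF) _; ring.
Qed.

Lemma ext_gen_Dec (B V : T -> Prop) n p q m y :
  ext_gen W B V n p (q - m%:Z) m y <-> ext_gen (Dec W d) B V n (p + n%:Z) q m y.
Proof.
split=> -[j [l [a [vs [hjm [hsz [hBa [hWa hVy]]]]]]]];
  exists j, l, a, vs; do 3 (split; first by []); (split; last exact: hVy).
  by apply: Dec_cast hWa _; rewrite -hjm PoszD PoszM; ring.
by apply: W_cast (proj1 hWa) _ erefl; rewrite -hjm PoszD PoszM; ring.
Qed.

Lemma Er_ext_Dec r (B C : T -> Prop) :
  Er_ext r.+1 deg d W B C -> Er_ext r deg d (Dec W d) B C.
Proof.
move=> [n [p [V [hfree [hxi hfilt]]]]].
exists n, (p + n%:Z), V; split=> //; split.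
  move=> v /hxi [hb hw]; split=> //.
  by apply: Dec_cast hw _; rewrite -addn1 PoszD; ring.
move=> q m x hx; split.
  move=> /Dec_iff /(hfilt _ _ _ hx) [s [hs ->]].
  by exists s; split=> // y /hs /ext_gen_Dec.
move=> [s [hs hxs]]; apply/Dec_iff/(hfilt _ _ _ hx).
by exists s; split=> // y /hs /ext_gen_Dec.
Qed.

End Decalage.

Theorem lemma2p6 (k : fieldType) (hk : [pchar k] =i pred0) (r : nat)
    (T : algType k) (deg : nat -> T -> Prop) (d : T -> T)
    (W : int -> nat -> T -> Prop) :
  Er_cofibrant r.+1 deg d W ->
  (forall (n : nat) (p : int) (x : T), Dec W d p n x <-> W (p - n%:Z) n x) /\
  Er_cofibrant r deg d (Dec W d).
Proof.
move=> [HF [Bs [hB0 [hB0neg [hsubB [hext hexh]]]]]].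
have d_lowers q m x : W q m x -> W (q - 1) m.+1 (d x).
  by have [i hi] := hexh x; exact: (tower_lowering HF hB0 hsubB hext hi).
have Dec_W := Dec_iff d_lowers.
split=> //; split; first exact: Dec_filtered_dga.
exists Bs; do !split=> //.
- by move=> q x hq hx /Dec_W; rewrite subr0; exact: hB0neg.
- by move=> i; exact: Er_ext_Dec.
Qed.
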